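(* Let $\{g_d(n)\}_{d\geq 0,\,n\geq 1}$ be a double sequence of positive real numbers such that $g_d(1)=1$ for all $d\geq 0$ and \[ 0 \leq g_d(n) - n^d \leq \bigl(g_0(n)-1\bigr)\,(n-1)^{d}\qquad\text{for all } d\geq 0,\ n\geq 1 . \] Suppose there is a real number $r$ with $0<r\leq 1$ such that $q^{g_0}(n)\leq r^{-n}$ for all $n\geq 1$. For $n\geq 3$ define $D^{g}(n)$ by \[ D^{g}(n):=\begin{cases} -2\log_{9/8}(r)\, n, & n\equiv 0 \pmod 3,\\[2pt] \log_{9/8}(3)-2n\log_{9/8}(r)-\log_{9/8}(n+2), & n\equiv 1 \pmod 3,\\[2pt] \log_{9/8}(2)-(n+1)\log_{9/8}(r), & n\equiv 2 \pmod 3,\ n\neq 5,\\[2pt] \log_{9/8}\bigl(2\,q^{g_0}(4)\,q^{g_0}(6)\bigr), & n=5 . \end{cases} \] Let $n\geq 3$ and let $d$ be an integer with $d> D^{g}(n)$. Then \[ \frac{\bigl(q^{g_d}(n)\bigr)^2}{q^{g_d}(n-1)\,q^{g_d}(n+1)}<1 \quad\text{if and only if}\quad n\equiv 1 \pmod 3 . \]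
   Context: For a double sequence $\{g_d(n)\}_{d\geq 0,n\geq 1}$ of positive reals, the numbers $q^{g_d}(n)$ ($n\geq 0$) are defined as the coefficients of the power series \[ \sum_{n=0}^{\infty} q^{g_d}(n)\,t^n := \frac{1}{1-\sum_{n=1}^{\infty} g_d(n)\,t^n}, \] equivalently $q^{g_d}(0)=1$ and, for $n\geq 1$, $q^{g_d}(n)=\sum_{k\le n}\sum_{m_1+\dots+m_k=n,\ m_i\geq 1} g_d(m_1)\cdots g_d(m_k)$ (sum over all compositions of $n$). $\log_{9/8}$ denotes the logarithm to base $9/8$. *)

From Stdlib Require Import Reals Lra List.
Import ListNotations.
Open Scope R_scope.

Fixpoint comps_fuel (fuel n : nat) : list (list nat) :=
  match n with
  | O => [ [] ]
  | S _ =>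
    match fuel with
    | O => []
    | S f => flat_map (fun k => map (cons k) (comps_fuel f (n - k)%nat)) (seq 1 n)
    end
  end.

Definition compositions (n : nat) : list (list nat) := comps_fuel n n.

(* q^{g}(n) = sum over compositions (m_1,...,m_k) of n of g(m_1)...g(m_k);
   q^{g}(0) = 1 (empty composition). *)
Definition qg (g : nat -> R) (n : nat) : R :=
  fold_right Rplus 0
    (map (fun c => fold_right Rmult 1 (map g c)) (compositions n)).

Definition log98 (x : R) : R := ln x / ln (9/8).

Definition Dg (g0 : nat -> R) (r : R) (n : nat) : R :=
  if Nat.eqb (n mod 3) 0 then - 2 * log98 r * INR n
  else if Nat.eqb (n mod 3) 1 then
    log98 3 - 2 * INR n * log98 r - log98 (INR n + 2)
  else if Nat.eqb n 5 then log98 (2 * qg g0 4 * qg g0 6)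
  else log98 2 - (INR n + 1) * log98 r.

From Stdlib Require Import Reals List Lra Lia Arith.

(* Write M(m) for the largest product of the parts of a composition of m
   ([maxprod]).  The d-th powers dominate: every composition c of m with product
   p(c) contributes between p(c)^d and about g_0-weighted p(c)^d to q^{g_d}(m),
   and a non-optimal composition has p(c) <= (8/9) M(m) ([maxprod_gap]).  Hence
     q^{g_d}(m) ~ M(m)^d * (number of optimal compositions of m) = M(m)^d * nopt(m),
   with an error controlled by (8/9)^d q^{g_0}(m) ([q_upper], [q_lower_3k],
   [q_lower_3k2]).  The ratio q(n)^2 / (q(n-1) q(n+1)) is then governed by
   M(n)^2 / (M(n-1) M(n+1)), which equals 9/8 when n = 0 mod 3, 1 when n = 2 mod 3
   (where the counts nopt decide) and 8/9 when n = 1 mod 3 ([maxprod_mod0],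
   [maxprod_mod2], [maxprod_mod1]).  The condition d > D^g(n) makes (8/9)^d small
   enough for each case ([Dg_mod0], [Dg_mod2], [Dg_mod1]). *)

Local Open Scope nat_scope.

(* [maxprod m] is the largest product of the parts of a composition of [m]:
   split off 3's, ending with a 2, 3 or 4.  For m >= 2 it satisfies
   maxprod (m + 3) = 3 * maxprod m. *)
Fixpoint maxprod (m : nat) : nat :=
  match m with
  | 0 => 1 | 1 => 1 | 2 => 2 | 3 => 3 | 4 => 4
  | S (S (S k)) => 3 * maxprod k
  end.

Lemma maxprod_step k : 2 <= k -> maxprod (k + 3) = 3 * maxprod k.
Proof.
  intros Hk. replace (k + 3) with (S (S (S k))) by lia.
  destruct k as [|[|k]]; [lia|lia|reflexivity].
Qed.

Lemma maxprod_ind (P : nat -> Prop) :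
  (forall m, m <= 4 -> P m) -> (forall k, 2 <= k -> P k -> P (k + 3)) -> forall m, P m.
Proof.
  intros Hsmall Hstep m. induction m as [m IH] using lt_wf_ind.
  destruct (Nat.le_gt_cases m 4) as [Hm|Hm]; [now apply Hsmall|].
  replace m with ((m - 3) + 3) by lia. apply Hstep; [lia|]. apply IH; lia.
Qed.

Lemma maxprod_pos m : 1 <= maxprod m.
Proof.
  induction m using maxprod_ind.
  - destruct m as [|[|[|[|[|m]]]]]; simpl; lia.
  - rewrite maxprod_step; lia.
Qed.

Lemma maxprod_3i i : maxprod (3 * i) = 3 ^ i.
Proof.
  induction i as [|[|i] IH]; [reflexivity|reflexivity|].
  replace (3 * S (S i)) with (3 * S i + 3) by lia.
  rewrite maxprod_step, IH by lia. simpl. lia.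
Qed.

Lemma maxprod_3i2 i : maxprod (3 * i + 2) = 2 * 3 ^ i.
Proof.
  induction i as [|i IH]; [reflexivity|].
  replace (3 * S i + 2) with (3 * i + 2 + 3) by lia.
  rewrite maxprod_step, IH by lia. simpl. lia.
Qed.

Lemma maxprod_3i4 i : maxprod (3 * i + 4) = 4 * 3 ^ i.
Proof.
  induction i as [|i IH]; [reflexivity|].
  replace (3 * S i + 4) with (3 * i + 4 + 3) by lia.
  rewrite maxprod_step, IH by lia. simpl. lia.
Qed.

Lemma maxprod_gap a b :
  maxprod a * maxprod b = maxprod (a + b) \/
  9 * (maxprod a * maxprod b) <= 8 * maxprod (a + b).
Proof.
  revert b. induction a as [a Ha|a Ha IHa] using maxprod_ind; intros b.
  - induction b as [b Hb|b Hb IHb] using maxprod_ind.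
    + destruct a as [|[|[|[|[|a]]]]]; destruct b as [|[|[|[|[|b]]]]];
        try lia; simpl; lia.
    + replace (a + (b + 3)) with (a + b + 3) by lia.
      rewrite !maxprod_step by lia. lia.
  - replace (a + 3 + b) with (a + b + 3) by lia.
    rewrite !maxprod_step by lia. specialize (IHa b). lia.
Qed.

Lemma maxprod_supermul a b : maxprod a * maxprod b <= maxprod (a + b).
Proof. destruct (maxprod_gap a b); lia. Qed.

(* A part j >= 5 is never optimal: it can be split profitably. *)
Lemma maxprod_large_part j : 5 <= j -> 9 * j <= 8 * maxprod j.
Proof.
  induction j as [j Hj4|j Hj2 IH] using maxprod_ind; intros Hj.
  - lia.
  - rewrite maxprod_step by lia. pose proof (maxprod_pos j).
    destruct (Nat.le_gt_cases 5 j) as [H5|H5]; [specialize (IH H5); lia|].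
    destruct j as [|[|[|[|[|j]]]]]; simpl; lia.
Qed.

Lemma first_part_gap m j : 1 <= j <= m ->
  j * maxprod (m - j) = maxprod m \/ 9 * (j * maxprod (m - j)) <= 8 * maxprod m.
Proof.
  intros Hj. pose proof (maxprod_gap j (m - j)) as Hgap.
  pose proof (maxprod_supermul j (m - j)) as Hsup.
  replace (j + (m - j)) with m in Hgap, Hsup by lia.
  destruct (Nat.le_gt_cases j 4) as [Hsmall|Hlarge].
  - replace (maxprod j) with j in Hgap
      by (destruct j as [|[|[|[|[|j]]]]]; simpl; lia).
    exact Hgap.
  - right. pose proof (maxprod_large_part j ltac:(lia)).
    pose proof (Nat.mul_le_mono_r _ _ (maxprod (m - j)) H). lia.
Qed.

(* [optimal m j]: j is the first part of some composition of m of maximal product. *)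
Definition optimal (m j : nat) : bool := Nat.eqb (j * maxprod (m - j)) (maxprod m).

Lemma optimal_true m j : 1 <= j <= m -> optimal m j = true ->
  j * maxprod (m - j) = maxprod m /\ j <= 4.
Proof.
  intros Hj Hopt. apply Nat.eqb_eq in Hopt. split; [exact Hopt|].
  destruct (Nat.le_gt_cases j 4) as [H4|H5]; [exact H4|].
  pose proof (maxprod_large_part j ltac:(lia)) as Hlarge.
  pose proof (maxprod_supermul j (m - j)) as Hsup.
  replace (j + (m - j)) with m in Hsup by lia. pose proof (maxprod_pos (m - j)).
  pose proof (Nat.mul_le_mono_r _ _ (maxprod (m - j)) Hlarge). lia.
Qed.

Lemma optimal_false m j : 1 <= j <= m -> optimal m j = false ->
  9 * (j * maxprod (m - j)) <= 8 * maxprod m.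
Proof.
  intros Hj Hopt. apply Nat.eqb_neq in Hopt.
  destruct (first_part_gap m j Hj); [lia|assumption].
Qed.

Lemma optimal_shift3 i m j : j + 2 <= m -> optimal (3 * i + m) j = optimal m j.
Proof.
  intros Hm. induction i as [|i IH]; [reflexivity|]. rewrite <- IH. unfold optimal.
  replace (3 * S i + m) with (3 * i + m + 3) by lia.
  replace (3 * i + m + 3 - j) with (3 * i + m - j + 3) by lia.
  rewrite !maxprod_step by lia.
  destruct (Nat.eqb_spec (j * maxprod (3 * i + m - j)) (maxprod (3 * i + m)));
  destruct (Nat.eqb_spec (j * (3 * maxprod (3 * i + m - j))) (3 * maxprod (3 * i + m)));
  lia.
Qed.

Lemma maxprod_mod0 k : 1 <= k ->
  9 * (maxprod (3 * k - 1) * maxprod (3 * k + 1)) = 8 * (maxprod (3 * k) * maxprod (3 * k)).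
Proof.
  intros Hk. destruct k as [|k]; [lia|].
  replace (3 * S k - 1) with (3 * k + 2) by lia.
  replace (3 * S k + 1) with (3 * k + 4) by lia.
  rewrite maxprod_3i2, maxprod_3i4, maxprod_3i. simpl. nia.
Qed.

Lemma maxprod_mod2 j :
  maxprod (3 * j + 5) * maxprod (3 * j + 5) = maxprod (3 * j + 4) * maxprod (3 * j + 6).
Proof.
  replace (3 * j + 5) with (3 * (j + 1) + 2) by lia.
  replace (3 * j + 6) with (3 * (j + 2)) by lia.
  rewrite maxprod_3i2, maxprod_3i4, maxprod_3i, !Nat.pow_add_r. simpl. nia.
Qed.

Lemma maxprod_mod1 i :
  9 * (maxprod (3 * i + 4) * maxprod (3 * i + 4)) = 8 * (maxprod (3 * i + 3) * maxprod (3 * i + 5)).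
Proof.
  replace (3 * i + 3) with (3 * (i + 1)) by lia.
  replace (3 * i + 5) with (3 * (i + 1) + 2) by lia.
  rewrite maxprod_3i2, maxprod_3i4, maxprod_3i, !Nat.pow_add_r. simpl. nia.
Qed.

Local Open Scope R_scope.

Definition sumR (f : nat -> R) (l : list nat) : R :=
  fold_right (fun k acc => f k + acc) 0 l.

Lemma sumR_nonneg f l : (forall x, In x l -> 0 <= f x) -> 0 <= sumR f l.
Proof.
  induction l as [|a l IH]; intros H; simpl; [lra|].
  pose proof (H a (or_introl eq_refl)).
  assert (0 <= sumR f l) by (apply IH; intros; apply H; right; auto). lra.
Qed.

Lemma sumR_le f h l : (forall x, In x l -> f x <= h x) -> sumR f l <= sumR h l.
Proof.
  induction l as [|a l IH]; intros H; simpl; [lra|].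
  pose proof (H a (or_introl eq_refl)).
  assert (sumR f l <= sumR h l) by (apply IH; intros; apply H; right; auto). lra.
Qed.

Lemma sumR_zero f l : (forall x, In x l -> f x = 0) -> sumR f l = 0.
Proof.
  induction l as [|a l IH]; intros H; simpl; [lra|].
  rewrite H, IH; [lra| |left; auto]. intros; apply H; right; auto.
Qed.

Lemma sumR_affine A t f h l :
  sumR (fun k => A * (f k + t * (h k - f k))) l = A * (sumR f l + t * (sumR h l - sumR f l)).
Proof. induction l as [|a l IH]; simpl; [ring|]. rewrite IH. ring. Qed.

Lemma sumR_split3 f m : (3 <= m)%nat ->
  sumR f (seq 1 m) = f 1%nat + (f 2%nat + (f 3%nat + sumR f (seq 4 (m - 3)))).
Proof. intros H. replace m with (S (S (S (m - 3)))) at 1 by lia. reflexivity. Qed.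

Lemma sumR_split4 f m : (4 <= m)%nat ->
  sumR f (seq 1 m) = f 1%nat + (f 2%nat + (f 3%nat + (f 4%nat + sumR f (seq 5 (m - 4))))).
Proof. intros H. replace m with (S (S (S (S (m - 4))))) at 1 by lia. reflexivity. Qed.

Lemma flat_map_ext_in {A B} (f h : A -> list B) (l : list A) :
  (forall x, In x l -> f x = h x) -> flat_map f l = flat_map h l.
Proof.
  induction l as [|a l IH]; intros H; simpl; [reflexivity|].
  rewrite H, IH; [reflexivity| |left; reflexivity]. intros; apply H; right; assumption.
Qed.

Lemma comps_fuel_indep f1 f2 m : (m <= f1)%nat -> (m <= f2)%nat ->
  comps_fuel f1 m = comps_fuel f2 m.
Proof.
  revert f2 m. induction f1 as [|f1 IH]; intros f2 m H1 H2.
  - replace m with 0%nat by lia. destruct f2; reflexivity.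
  - destruct m as [|m]; [destruct f2; reflexivity|].
    destruct f2 as [|f2]; [lia|]. cbn [comps_fuel].
    apply flat_map_ext_in. intros k Hk. apply in_seq in Hk.
    f_equal. apply IH; lia.
Qed.

Definition prod_parts (g : nat -> R) (c : list nat) : R := fold_right Rmult 1 (map g c).

Lemma sum_prod_parts_cons (g : nat -> R) k (L : list (list nat)) :
  fold_right Rplus 0 (map (prod_parts g) (map (cons k) L)) =
  g k * fold_right Rplus 0 (map (prod_parts g) L).
Proof. induction L as [|c L IH]; simpl; [ring|]. rewrite IH. unfold prod_parts. simpl. ring. Qed.

Lemma fold_Rplus_app (l1 l2 : list R) :
  fold_right Rplus 0 (l1 ++ l2) = fold_right Rplus 0 l1 + fold_right Rplus 0 l2.
Proof. induction l1 as [|x l1 IH]; simpl; [ring|]. rewrite IH. ring. Qed.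

Lemma qg_0 g : qg g 0 = 1.
Proof. unfold qg. simpl. ring. Qed.

Lemma qg_rec (g : nat -> R) (m : nat) : (1 <= m)%nat ->
  qg g m = sumR (fun k => g k * qg g (m - k)) (seq 1 m).
Proof.
  intros Hm. destruct m as [|n]; [lia|].
  unfold qg, compositions. fold (prod_parts g).
  replace (comps_fuel (S n) (S n)) with
    (flat_map (fun k => map (cons k) (comps_fuel (S n - k) (S n - k))) (seq 1 (S n))).
  2:{ cbn [comps_fuel]. apply flat_map_ext_in. intros k Hk. apply in_seq in Hk.
      f_equal. apply comps_fuel_indep; lia. }
  induction (seq 1 (S n)) as [|k l IH]; [reflexivity|].
  cbn [flat_map]. rewrite map_app, fold_Rplus_app, sum_prod_parts_cons, IH.
  reflexivity.
Qed.

(* With g(1) = 1 and g >= 0, the composition 1+...+1 already gives q >= 1. *)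
Lemma qg_ge1 (G : nat -> R) : G 1%nat = 1 -> (forall j, (1 <= j)%nat -> 0 <= G j) ->
  forall m, 1 <= qg G m.
Proof.
  intros H1 Hpos m. induction m as [m IH] using lt_wf_ind.
  destruct m as [|m]; [rewrite qg_0; lra|].
  rewrite qg_rec by lia. change (seq 1 (S m)) with (1%nat :: seq 2 m).
  change (sumR ?f (?a :: ?l)) with (f a + sumR f l). cbv beta. rewrite H1. replace (S m - 1)%nat with m by lia.
  assert (1 <= qg G m) by (apply IH; lia).
  assert (0 <= sumR (fun k => G k * qg G (S m - k)) (seq 2 m)).
  { apply sumR_nonneg. intros k Hk. apply in_seq in Hk.
    assert (1 <= qg G (S m - k)) by (apply IH; lia). pose proof (Hpos k ltac:(lia)). nra. }
  lra.
Qed.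

(* [nopt m] is the number of compositions of m of maximal product
   (all parts in {2,3,4}, or the single part 1 when m = 1):
   1 for m = 3i, i+1 for m = 3i+2, (i+1)(i+4)/2 for m = 3i+4. *)
Definition nopt (m : nat) : R :=
  match (m mod 3)%nat with
  | O => 1
  | 2%nat => INR (m / 3) + 1
  | _ => if Nat.eqb m 1 then 1 else INR (m / 3) * (INR (m / 3) + 3) / 2
  end.

Lemma mod_div_3 i s : (s < 3)%nat -> ((3 * i + s) mod 3 = s /\ (3 * i + s) / 3 = i)%nat.
Proof.
  intros H. split; symmetry; [eapply Nat.mod_unique|eapply Nat.div_unique]; eauto.
Qed.

Lemma nopt_3i i : nopt (3 * i) = 1.
Proof.
  unfold nopt. replace (3 * i)%nat with (3 * i + 0)%nat by lia.
  destruct (mod_div_3 i 0 ltac:(lia)) as [-> _]. reflexivity.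
Qed.

Lemma nopt_3i2 i : nopt (3 * i + 2) = INR i + 1.
Proof. unfold nopt. destruct (mod_div_3 i 2 ltac:(lia)) as [-> ->]. reflexivity. Qed.

Lemma nopt_3i4 i : nopt (3 * i + 4) = (INR i + 1) * (INR i + 4) / 2.
Proof.
  unfold nopt. replace (3 * i + 4)%nat with (3 * (i + 1) + 1)%nat by lia.
  destruct (mod_div_3 (i + 1) 1 ltac:(lia)) as [-> ->].
  destruct (Nat.eqb_spec (3 * (i + 1) + 1) 1); [lia|]. rewrite plus_INR. simpl. field.
Qed.

Lemma nopt_nonneg m : 0 <= nopt m.
Proof.
  pose proof (pos_INR (m / 3)). unfold nopt.
  destruct (m mod 3)%nat as [|[|[|s]]]; try destruct (Nat.eqb m 1);
    try lra; unfold Rdiv; apply Rmult_le_pos; nra.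
Qed.

Definition nopt_term (m j : nat) : R := if optimal m j then nopt (m - j) else 0.

(* Counting optimal compositions by their first part (necessarily <= 4). *)
Lemma nopt_rec m : (1 <= m)%nat -> sumR (nopt_term m) (seq 1 m) = nopt m.
Proof.
  intros Hm. destruct (le_lt_dec m 5) as [Hsmall|Hlarge].
  { destruct m as [|[|[|[|[|[|m]]]]]]; try lia;
      unfold nopt_term, optimal, nopt; simpl; lra. }
  rewrite sumR_split4 by lia.
  rewrite (sumR_zero (nopt_term m)), Rplus_0_r.
  2:{ intros j Hj. apply in_seq in Hj. unfold nopt_term.
      destruct (optimal m j) eqn:E; [apply optimal_true in E; lia|reflexivity]. }
  assert (Hdiv := Nat.div_mod (m - 6) 3 ltac:(lia)).
  assert (Hmod := Nat.mod_upper_bound (m - 6) 3 ltac:(lia)).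
  set (i := ((m - 6) / 3)%nat) in *. unfold nopt_term.
  destruct ((m - 6) mod 3)%nat as [|[|[|s]]] eqn:Er; [| | |lia].
  -
    replace m with (3 * i + 6)%nat by lia. rewrite !optimal_shift3 by lia.
    change (optimal 6 1) with false; change (optimal 6 2) with false;
    change (optimal 6 3) with true; change (optimal 6 4) with false; cbv iota. replace (3 * i + 6 - 3)%nat with (3 * (i + 1))%nat by lia.
    replace (3 * i + 6)%nat with (3 * (i + 2))%nat by lia. rewrite !nopt_3i. ring.
  -
    replace m with (3 * i + 7)%nat by lia. rewrite !optimal_shift3 by lia.
    change (optimal 7 1) with false; change (optimal 7 2) with true;
    change (optimal 7 3) with true; change (optimal 7 4) with true; cbv iota.
    replace (3 * i + 7 - 2)%nat with (3 * (i + 1) + 2)%nat by lia.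
    replace (3 * i + 7 - 3)%nat with (3 * i + 4)%nat by lia.
    replace (3 * i + 7 - 4)%nat with (3 * (i + 1))%nat by lia.
    replace (3 * i + 7)%nat with (3 * (i + 1) + 4)%nat by lia.
    rewrite nopt_3i, nopt_3i2, !nopt_3i4, !plus_INR. simpl. field.
  -
    replace m with (3 * i + 8)%nat by lia. rewrite !optimal_shift3 by lia.
    change (optimal 8 1) with false; change (optimal 8 2) with true;
    change (optimal 8 3) with true; change (optimal 8 4) with false; cbv iota.
    replace (3 * i + 8 - 2)%nat with (3 * (i + 2))%nat by lia.
    replace (3 * i + 8 - 3)%nat with (3 * (i + 1) + 2)%nat by lia.
    replace (3 * i + 8)%nat with (3 * (i + 2) + 2)%nat by lia.
    rewrite nopt_3i, !nopt_3i2, !plus_INR. simpl. ring.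
Qed.

Lemma pow_INR_mul a b d : INR a ^ d * INR b ^ d = INR (a * b) ^ d.
Proof. rewrite mult_INR, Rpow_mult_distr. reflexivity. Qed.

Lemma pow_INR_98 a b d : (9 * a = 8 * b)%nat -> INR a ^ d = (8/9) ^ d * INR b ^ d.
Proof.
  intros H. rewrite <- Rpow_mult_distr. f_equal.
  apply (f_equal INR) in H. rewrite !mult_INR in H. simpl in H. lra.
Qed.

Lemma pow_le_one x n : 0 <= x <= 1 -> x ^ n <= 1.
Proof. intros H. induction n; simpl; [lra|]. pose proof (pow_le x n ltac:(lra)). nra. Qed.

Lemma pred_pow_le j d : (1 <= j <= 9)%nat -> INR (j - 1) ^ d <= (8/9) ^ d * INR j ^ d.
Proof.
  intros H. rewrite <- Rpow_mult_distr. apply pow_incr. split; [apply pos_INR|].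
  rewrite minus_INR by lia.
  assert (INR 1 <= INR j <= INR 9) by (split; apply le_INR; lia).
  simpl in *. lra.
Qed.

Section Bounds.
(* G plays the role of g_d and G0 that of g_0; the hypotheses are those of the
   theorem (g_0(n) >= 1 being the case d = 0 of the lower bound). *)
Variables (G G0 : nat -> R) (d : nat).
Hypothesis hG1 : G 1%nat = 1.
Hypothesis hG01 : G0 1%nat = 1.
Hypothesis hG0 : forall j, (1 <= j)%nat -> 1 <= G0 j.
Hypothesis hGlow : forall j, (1 <= j)%nat -> INR j ^ d <= G j.
Hypothesis hGup : forall j, (1 <= j)%nat -> G j <= INR j ^ d + (G0 j - 1) * INR (j - 1) ^ d.

Lemma G_nonneg j : (1 <= j)%nat -> 0 <= G j.
Proof. intros H. pose proof (hGlow j H). pose proof (pow_le (INR j) d (pos_INR j)). lra. Qed.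

Lemma q_ge1 m : 1 <= qg G m.
Proof. apply qg_ge1; [exact hG1|exact G_nonneg]. Qed.

Lemma q0_ge1 m : 1 <= qg G0 m.
Proof. apply qg_ge1; [exact hG01|]. intros j Hj. pose proof (hG0 j Hj). lra. Qed.

Lemma q_ge_parts23 m : (3 <= m)%nat ->
  G 2%nat * qg G (m - 2) + G 3%nat * qg G (m - 3) <= qg G m.
Proof.
  intros Hm. rewrite (qg_rec G m), sumR_split3 by lia.
  assert (0 <= sumR (fun k => G k * qg G (m - k)) (seq 4 (m - 3))).
  { apply sumR_nonneg. intros k Hk. apply in_seq in Hk.
    apply Rmult_le_pos; [apply G_nonneg; lia|pose proof (q_ge1 (m - k)); lra]. }
  assert (0 <= G 1%nat * qg G (m - 1)) by (rewrite hG1; pose proof (q_ge1 (m - 1)); lra).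
  lra.
Qed.

(* The single optimal composition 3+...+3 of 3k. *)
Lemma q_lower_3k k : INR (maxprod (3 * k)) ^ d <= qg G (3 * k).
Proof.
  induction k as [|k IH]; [rewrite qg_0; simpl; rewrite pow1; lra|].
  pose proof (q_ge_parts23 (3 * S k) ltac:(lia)) as Hparts.
  replace (3 * S k - 3)%nat with (3 * k)%nat in Hparts by lia.
  assert (0 <= G 2%nat * qg G (3 * S k - 2)).
  { apply Rmult_le_pos; [apply G_nonneg; lia|pose proof (q_ge1 (3 * S k - 2)); lra]. }
  assert (INR (maxprod (3 * S k)) ^ d <= G 3%nat * qg G (3 * k)).
  { replace (maxprod (3 * S k)) with (3 * maxprod (3 * k))%nat
      by (rewrite !maxprod_3i; simpl; lia).
    rewrite <- pow_INR_mul. apply Rmult_le_compat; auto using pow_le, pos_INR. }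
  lra.
Qed.

(* The k+1 optimal compositions of 3k+2 (one part 2, the others 3). *)
Lemma q_lower_3k2 k : (INR k + 1) * INR (maxprod (3 * k + 2)) ^ d <= qg G (3 * k + 2).
Proof.
  induction k as [|k IH].
  { change (3 * 0 + 2)%nat with 2%nat. rewrite (qg_rec G 2) by lia. simpl. rewrite qg_0, hG1.
    pose proof (hGlow 2 ltac:(lia)). pose proof (q_ge1 1). simpl in *. lra. }
  pose proof (q_ge_parts23 (3 * S k + 2) ltac:(lia)) as Hparts.
  replace (3 * S k + 2 - 2)%nat with (3 * S k)%nat in Hparts by lia.
  replace (3 * S k + 2 - 3)%nat with (3 * k + 2)%nat in Hparts by lia.
  assert (E2 : maxprod (3 * S k + 2) = (2 * maxprod (3 * S k))%nat)
    by (rewrite maxprod_3i2, maxprod_3i; lia).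
  assert (E3 : maxprod (3 * S k + 2) = (3 * maxprod (3 * k + 2))%nat)
    by (rewrite !maxprod_3i2; simpl; lia).
  assert (A2 : INR (maxprod (3 * S k + 2)) ^ d <= G 2%nat * qg G (3 * S k)).
  { rewrite E2, <- pow_INR_mul.
    apply Rmult_le_compat; auto using pow_le, pos_INR, q_lower_3k. }
  assert (A3 : (INR k + 1) * INR (maxprod (3 * S k + 2)) ^ d <= G 3%nat * qg G (3 * k + 2)).
  { rewrite E3, <- pow_INR_mul.
    replace ((INR k + 1) * (INR 3 ^ d * INR (maxprod (3 * k + 2)) ^ d))
      with (INR 3 ^ d * ((INR k + 1) * INR (maxprod (3 * k + 2)) ^ d)) by ring.
    apply Rmult_le_compat; auto using pow_le, pos_INR.
    apply Rmult_le_pos; [pose proof (pos_INR k); lra|apply pow_le, pos_INR]. }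
  rewrite S_INR. lra.
Qed.

(* Each optimal composition contributes at least 1 to q^{g_0}. *)
Lemma nopt_le_q0 m : nopt m <= qg G0 m.
Proof.
  induction m as [m IH] using lt_wf_ind.
  destruct m as [|m]; [rewrite qg_0; unfold nopt; simpl; lra|].
  rewrite <- nopt_rec, (qg_rec G0) by lia. apply sumR_le.
  intros k Hk. apply in_seq in Hk. unfold nopt_term.
  pose proof (q0_ge1 (S m - k)). pose proof (hG0 k ltac:(lia)).
  destruct (optimal (S m) k); [|nra].
  assert (nopt (S m - k) <= qg G0 (S m - k)) by (apply IH; lia).
  pose proof (nopt_nonneg (S m - k)). nra.
Qed.

(* The weighted count of compositions of m: the optimal ones count 1, each
   remaining one (with its g_0-weight) is discounted by (8/9)^d. *)
Definition weighted (m : nat) : R := nopt m + (8/9) ^ d * (qg G0 m - nopt m).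

Lemma theta_bounds : 0 < (8/9) ^ d <= 1.
Proof. split; [apply pow_lt; lra|apply pow_le_one; lra]. Qed.

Lemma weighted_bounds m : 0 <= weighted m <= qg G0 m.
Proof.
  unfold weighted. pose proof theta_bounds. pose proof (nopt_nonneg m).
  pose proof (nopt_le_q0 m). nra.
Qed.

Lemma G_le_small j : (1 <= j <= 9)%nat -> G j <= INR j ^ d * (1 + (G0 j - 1) * (8/9) ^ d).
Proof.
  intros Hj. pose proof (hGup j ltac:(lia)). pose proof (pred_pow_le j d Hj).
  pose proof (hG0 j ltac:(lia)). nra.
Qed.

Lemma G_le_G0 j : (1 <= j)%nat -> G j <= G0 j * INR j ^ d.
Proof.
  intros Hj. pose proof (hGup j Hj). pose proof (hG0 j Hj).
  assert (INR (j - 1) ^ d <= INR j ^ d) by (apply pow_incr; split; [apply pos_INR|apply le_INR; lia]).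
  nra.
Qed.

Lemma term_optimal m k : (1 <= k <= m)%nat -> optimal m k = true ->
  qg G (m - k) <= INR (maxprod (m - k)) ^ d * weighted (m - k) ->
  G k * qg G (m - k) <=
  INR (maxprod m) ^ d * (nopt (m - k) + (8/9) ^ d * (G0 k * qg G0 (m - k) - nopt (m - k))).
Proof.
  intros Hk Hopt IH. apply optimal_true in Hopt as [Hprod Hk4]; [|exact Hk].
  pose proof (weighted_bounds (m - k)) as HX. pose proof (q_ge1 (m - k)).
  pose proof (hG0 k ltac:(lia)). pose proof theta_bounds.
  pose proof (G_le_small k ltac:(lia)) as HG. pose proof (G_nonneg k ltac:(lia)).
  set (e := (G0 k - 1) * (8/9) ^ d) in HG.
  assert (He : 0 <= e) by (apply Rmult_le_pos; lra).
  assert (0 <= INR k ^ d) by (apply pow_le, pos_INR).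
  assert (0 <= INR (maxprod (m - k)) ^ d) by (apply pow_le, pos_INR).
  assert (HMM : INR k ^ d * INR (maxprod (m - k)) ^ d = INR (maxprod m) ^ d)
    by (rewrite pow_INR_mul, Hprod; reflexivity).
  apply Rle_trans with ((INR k ^ d * (1 + e)) * (INR (maxprod (m - k)) ^ d * weighted (m - k))).
  { apply Rmult_le_compat; lra. }
  replace ((INR k ^ d * (1 + e)) * (INR (maxprod (m - k)) ^ d * weighted (m - k)))
    with (INR (maxprod m) ^ d * (weighted (m - k) + e * weighted (m - k)))
    by (rewrite <- HMM; ring).
  apply Rmult_le_compat_l; [apply pow_le, pos_INR|].
  assert (e * weighted (m - k) <= e * qg G0 (m - k)) by (apply Rmult_le_compat_l; lra).
  unfold weighted, e in *. nra.
Qed.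

Lemma term_not_optimal m k : (1 <= k <= m)%nat -> optimal m k = false ->
  qg G (m - k) <= INR (maxprod (m - k)) ^ d * qg G0 (m - k) ->
  G k * qg G (m - k) <= INR (maxprod m) ^ d * (0 + (8/9) ^ d * (G0 k * qg G0 (m - k) - 0)).
Proof.
  intros Hk Hopt IH. apply optimal_false in Hopt; [|exact Hk].
  pose proof (q_ge1 (m - k)). pose proof (q0_ge1 (m - k)). pose proof (hG0 k ltac:(lia)).
  pose proof (G_le_G0 k ltac:(lia)) as HG. pose proof (G_nonneg k ltac:(lia)).
  assert (HKM : INR k ^ d * INR (maxprod (m - k)) ^ d <= (8/9) ^ d * INR (maxprod m) ^ d).
  { rewrite pow_INR_mul, <- Rpow_mult_distr. apply pow_incr.
    split; [apply pos_INR|]. apply le_INR in Hopt. rewrite !mult_INR in Hopt.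
    rewrite mult_INR. simpl in Hopt. lra. }
  assert (0 <= INR k ^ d) by (apply pow_le, pos_INR).
  assert (0 <= INR (maxprod (m - k)) ^ d) by (apply pow_le, pos_INR).
  apply Rle_trans with ((G0 k * INR k ^ d) * (INR (maxprod (m - k)) ^ d * qg G0 (m - k))).
  { apply Rmult_le_compat; lra. }
  replace ((G0 k * INR k ^ d) * (INR (maxprod (m - k)) ^ d * qg G0 (m - k)))
    with ((G0 k * qg G0 (m - k)) * (INR k ^ d * INR (maxprod (m - k)) ^ d)) by ring.
  apply Rle_trans with ((G0 k * qg G0 (m - k)) * ((8/9) ^ d * INR (maxprod m) ^ d)).
  { apply Rmult_le_compat_l; [nra|exact HKM]. }
  lra.
Qed.

Lemma q_upper m : qg G m <= INR (maxprod m) ^ d * weighted m.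
Proof.
  induction m as [m IH] using lt_wf_ind.
  destruct m as [|m]; [rewrite qg_0; unfold weighted, nopt; simpl; rewrite pow1, qg_0; lra|].
  unfold weighted at 1.
  rewrite (qg_rec G), <- (nopt_rec (S m)), (qg_rec G0 (S m)), <- sumR_affine by lia.
  apply sumR_le. intros k Hk. apply in_seq in Hk. unfold nopt_term.
  assert (IHk := IH (S m - k)%nat ltac:(lia)).
  destruct (optimal (S m) k) eqn:Hopt.
  - apply term_optimal; auto; lia.
  - apply term_not_optimal; auto; [lia|].
    pose proof (weighted_bounds (S m - k)).
    assert (0 <= INR (maxprod (S m - k)) ^ d) by (apply pow_le, pos_INR). nra.
Qed.

Lemma q_upper_crude m : qg G m <= INR (maxprod m) ^ d * qg G0 m.
Proof.
  pose proof (q_upper m). pose proof (weighted_bounds m).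
  assert (0 <= INR (maxprod m) ^ d) by (apply pow_le, pos_INR). nra.
Qed.

Lemma q_upper_half m : (8/9) ^ d * qg G0 m < 1/2 ->
  qg G m <= INR (maxprod m) ^ d * (nopt m + 1/2).
Proof.
  intros Hhalf. pose proof (q_upper m). pose proof theta_bounds. pose proof (nopt_nonneg m).
  assert (0 <= INR (maxprod m) ^ d) by (apply pow_le, pos_INR).
  assert (weighted m <= nopt m + 1/2) by (unfold weighted; nra). nra.
Qed.

Lemma maxprod_pow_pos m : 0 < INR (maxprod m) ^ d.
Proof. apply pow_lt, lt_0_INR. pose proof (maxprod_pos m). lia. Qed.

(* The growth bound q^{g_0}(m) <= rho^m, with rho = 1/r. *)
Variable rho : R.
Hypothesis hq : forall m, (1 <= m)%nat -> qg G0 m <= rho ^ m.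

Lemma q_le_rho m : (1 <= m)%nat -> qg G m <= INR (maxprod m) ^ d * rho ^ m.
Proof.
  intros Hm. pose proof (q_upper_crude m). pose proof (hq m Hm).
  pose proof (maxprod_pow_pos m). nra.
Qed.

Lemma ratio_mod0 k : (1 <= k)%nat -> rho ^ (2 * (3 * k)) * (8/9) ^ d < 1 ->
  qg G (3 * k - 1) * qg G (3 * k + 1) < qg G (3 * k) ^ 2.
Proof.
  intros Hk Hsmall.
  set (P := INR (maxprod (3 * k)) ^ d * INR (maxprod (3 * k)) ^ d).
  assert (HP : 0 < P) by (apply Rmult_lt_0_compat; apply maxprod_pow_pos).
  assert (Hbelow : qg G (3 * k - 1) * qg G (3 * k + 1) <= P * (rho ^ (2 * (3 * k)) * (8/9) ^ d)).
  { pose proof (q_ge1 (3 * k - 1)). pose proof (q_ge1 (3 * k + 1)).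
    apply Rle_trans with ((INR (maxprod (3 * k - 1)) ^ d * rho ^ (3 * k - 1)) *
                          (INR (maxprod (3 * k + 1)) ^ d * rho ^ (3 * k + 1))).
    { apply Rmult_le_compat; try lra; apply q_le_rho; lia. }
    replace (2 * (3 * k))%nat with (3 * k - 1 + (3 * k + 1))%nat by lia.
    rewrite (pow_add rho (3 * k - 1)). right.
    transitivity ((INR (maxprod (3 * k - 1)) ^ d * INR (maxprod (3 * k + 1)) ^ d) *
                  (rho ^ (3 * k - 1) * rho ^ (3 * k + 1))); [ring|].
    rewrite pow_INR_mul, (pow_INR_98 _ _ _ (maxprod_mod0 k Hk)), <- pow_INR_mul.
    unfold P. ring. }
  assert (Habove : P <= qg G (3 * k) ^ 2).
  { pose proof (q_lower_3k k). pose proof (maxprod_pow_pos (3 * k)). unfold P. nra. }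
  assert (P * (rho ^ (2 * (3 * k)) * (8/9) ^ d) < P * 1) by (apply Rmult_lt_compat_l; lra).
  lra.
Qed.

Lemma ratio_mod2 j : (8/9) ^ d * qg G0 (3 * j + 4) < 1/2 ->
  (8/9) ^ d * qg G0 (3 * j + 6) < 1/2 ->
  qg G (3 * j + 4) * qg G (3 * j + 6) < qg G (3 * j + 5) ^ 2.
Proof.
  intros Hhalf4 Hhalf6. pose proof (pos_INR j).
  set (P := INR (maxprod (3 * j + 4)) ^ d * INR (maxprod (3 * j + 6)) ^ d).
  assert (HP : 0 < P) by (apply Rmult_lt_0_compat; apply maxprod_pow_pos).
  assert (Hbelow : qg G (3 * j + 4) * qg G (3 * j + 6) <=
                   P * (((INR j + 1) * (INR j + 4) / 2 + 1/2) * (1 + 1/2))).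
  { pose proof (q_upper_half _ Hhalf4) as H4. pose proof (q_upper_half _ Hhalf6) as H6.
    replace (nopt (3 * j + 6)) with 1 in H6
      by (replace (3 * j + 6)%nat with (3 * (j + 2))%nat by lia; symmetry; apply nopt_3i).
    rewrite nopt_3i4 in H4. pose proof (q_ge1 (3 * j + 4)). pose proof (q_ge1 (3 * j + 6)).
    apply Rle_trans with
      ((INR (maxprod (3 * j + 4)) ^ d * ((INR j + 1) * (INR j + 4) / 2 + 1/2)) *
       (INR (maxprod (3 * j + 6)) ^ d * (1 + 1/2))).
    { apply Rmult_le_compat; lra. }
    right. unfold P. ring. }
  assert (Habove : (INR j + 2) ^ 2 * P <= qg G (3 * j + 5) ^ 2).
  { pose proof (q_lower_3k2 (j + 1)) as H5. rewrite plus_INR in H5. change (INR 1) with 1 in H5.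
    replace (3 * (j + 1) + 2)%nat with (3 * j + 5)%nat in H5 by lia.
    pose proof (maxprod_pow_pos (3 * j + 5)).
    replace P with (INR (maxprod (3 * j + 5)) ^ d * INR (maxprod (3 * j + 5)) ^ d)
      by (unfold P; rewrite !pow_INR_mul, maxprod_mod2; reflexivity).
    replace ((INR j + 2) ^ 2 * (INR (maxprod (3 * j + 5)) ^ d * INR (maxprod (3 * j + 5)) ^ d))
      with (((INR j + 2) * INR (maxprod (3 * j + 5)) ^ d) ^ 2) by ring.
    apply pow_incr. split; [apply Rmult_le_pos; lra|].
    replace (INR j + 2) with (INR j + 1 + 1) by ring. exact H5. }
  assert (((INR j + 1) * (INR j + 4) / 2 + 1/2) * (1 + 1/2) < (INR j + 2) ^ 2) by nra.
  assert (P * (((INR j + 1) * (INR j + 4) / 2 + 1/2) * (1 + 1/2)) < P * (INR j + 2) ^ 2)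
    by (apply Rmult_lt_compat_l; lra).
  lra.
Qed.

(* n = 3i+4: the ratio is below 1, thanks to the i+2 optimal compositions of n+1. *)
Lemma ratio_mod1 i : rho ^ (2 * (3 * i + 4)) * (8/9) ^ d < INR i + 2 ->
  qg G (3 * i + 4) ^ 2 < qg G (3 * i + 3) * qg G (3 * i + 5).
Proof.
  intros Hsmall. pose proof (pos_INR i).
  set (P := INR (maxprod (3 * i + 3)) ^ d * INR (maxprod (3 * i + 5)) ^ d).
  assert (HP : 0 < P) by (apply Rmult_lt_0_compat; apply maxprod_pow_pos).
  assert (Hbelow : qg G (3 * i + 4) ^ 2 <= P * (rho ^ (2 * (3 * i + 4)) * (8/9) ^ d)).
  { pose proof (q_le_rho (3 * i + 4) ltac:(lia)). pose proof (q_ge1 (3 * i + 4)).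
    apply Rle_trans with ((INR (maxprod (3 * i + 4)) ^ d * rho ^ (3 * i + 4)) ^ 2).
    { apply pow_incr. lra. }
    replace (2 * (3 * i + 4))%nat with (3 * i + 4 + (3 * i + 4))%nat by lia.
    rewrite (pow_add rho (3 * i + 4)). right.
    transitivity ((INR (maxprod (3 * i + 4)) ^ d * INR (maxprod (3 * i + 4)) ^ d) *
                  (rho ^ (3 * i + 4) * rho ^ (3 * i + 4))); [ring|].
    rewrite pow_INR_mul, (pow_INR_98 _ _ _ (maxprod_mod1 i)), <- pow_INR_mul.
    unfold P. ring. }
  assert (Habove : (INR i + 2) * P <= qg G (3 * i + 3) * qg G (3 * i + 5)).
  { pose proof (q_lower_3k (i + 1)) as H3. pose proof (q_lower_3k2 (i + 1)) as H5.
    rewrite plus_INR in H5. change (INR 1) with 1 in H5.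
    replace (3 * (i + 1))%nat with (3 * i + 3)%nat in H3 by lia.
    replace (3 * (i + 1) + 2)%nat with (3 * i + 5)%nat in H5 by lia.
    pose proof (maxprod_pow_pos (3 * i + 3)). pose proof (maxprod_pow_pos (3 * i + 5)).
    apply Rle_trans with (INR (maxprod (3 * i + 3)) ^ d *
                          ((INR i + 1 + 1) * INR (maxprod (3 * i + 5)) ^ d)).
    { right. unfold P. ring. }
    apply Rmult_le_compat; nra. }
  assert (P * (rho ^ (2 * (3 * i + 4)) * (8/9) ^ d) < P * (INR i + 2))
    by (apply Rmult_lt_compat_l; lra).
  lra.
Qed.

End Bounds.

Lemma ln98_pos : 0 < ln (9/8).
Proof. rewrite <- ln_1. apply ln_increasing; lra. Qed.

Lemma log98_conv (d : nat) (Z : R) : 0 < Z -> INR d > log98 Z -> Z * (8/9) ^ d < 1.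
Proof.
  intros HZ Hd. pose proof ln98_pos. unfold log98 in Hd.
  assert (Hln : ln Z < ln ((9/8) ^ d)).
  { rewrite ln_pow by lra. apply Rmult_gt_compat_r with (r := ln (9/8)) in Hd; [|lra].
    unfold Rdiv in Hd. rewrite Rmult_assoc, Rinv_l in Hd by lra. lra. }
  apply ln_lt_inv in Hln; [|lra|apply pow_lt; lra].
  assert (0 < (8/9) ^ d) by (apply pow_lt; lra).
  assert ((9/8) ^ d * (8/9) ^ d = 1)
    by (rewrite <- Rpow_mult_distr; replace (9/8 * (8/9)) with 1 by field; apply pow1).
  nra.
Qed.

Lemma log98_mult x y : 0 < x -> 0 < y -> log98 (x * y) = log98 x + log98 y.
Proof. intros. unfold log98. rewrite ln_mult by assumption. field. pose proof ln98_pos. lra. Qed.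

Lemma log98_inv x : 0 < x -> log98 (/ x) = - log98 x.
Proof. intros. unfold log98. rewrite ln_Rinv by assumption. field. pose proof ln98_pos. lra. Qed.

Lemma log98_inv_pow r n : 0 < r -> log98 ((/ r) ^ n) = - INR n * log98 r.
Proof.
  intros Hr. unfold log98. rewrite ln_pow, ln_Rinv by (try apply Rinv_0_lt_compat; lra).
  field. pose proof ln98_pos. lra.
Qed.

Lemma Dg_mod0 g0 r d k : 0 < r -> INR d > Dg g0 r (3 * k) ->
  (/ r) ^ (2 * (3 * k)) * (8/9) ^ d < 1.
Proof.
  intros Hr Hd. apply log98_conv; [apply pow_lt, Rinv_0_lt_compat; lra|].
  unfold Dg in Hd. replace (3 * k)%nat with (3 * k + 0)%nat in * by lia.
  destruct (mod_div_3 k 0 ltac:(lia)) as [Hmod _]. rewrite Hmod in Hd. simpl Nat.eqb in Hd. cbv iota in Hd.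
  rewrite log98_inv_pow, mult_INR by assumption. change (INR 2) with 2. lra.
Qed.

Lemma Dg_mod1 g0 r d i : 0 < r -> INR d > Dg g0 r (3 * i + 4) ->
  (/ r) ^ (2 * (3 * i + 4)) * (8/9) ^ d < INR i + 2.
Proof.
  intros Hr Hd. pose proof (pos_INR i).
  assert (Hpow : 0 < (/ r) ^ (2 * (3 * i + 4))) by (apply pow_lt, Rinv_0_lt_compat; lra).
  assert (Hn2 : INR (3 * i + 4) + 2 = 3 * (INR i + 2))
    by (rewrite plus_INR, mult_INR; simpl; lra).
  assert (HZ : 3 * (/ r) ^ (2 * (3 * i + 4)) * / (INR (3 * i + 4) + 2) * (8/9) ^ d < 1).
  { apply log98_conv.
    { apply Rmult_lt_0_compat; [|apply Rinv_0_lt_compat]; lra. }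
    unfold Dg in Hd. replace (3 * i + 4)%nat with (3 * (i + 1) + 1)%nat in Hd by lia.
    destruct (mod_div_3 (i + 1) 1 ltac:(lia)) as [Hmod _]. rewrite Hmod in Hd. simpl Nat.eqb in Hd. cbv iota in Hd.
    replace (3 * (i + 1) + 1)%nat with (3 * i + 4)%nat in Hd by lia.
    rewrite !log98_mult, log98_inv, log98_inv_pow, mult_INR
      by (try apply Rmult_lt_0_compat; try apply Rinv_0_lt_compat; lra).
    change (INR 2) with 2. lra. }
  rewrite Hn2 in HZ.
  replace (3 * (/ r) ^ (2 * (3 * i + 4)) * / (3 * (INR i + 2)) * (8/9) ^ d)
    with ((/ r) ^ (2 * (3 * i + 4)) * (8/9) ^ d / (INR i + 2)) in HZ by (field; lra).
  apply Rmult_lt_compat_r with (r := INR i + 2) in HZ; [|lra].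
  unfold Rdiv in HZ. rewrite Rmult_assoc, Rinv_l, Rmult_1_r in HZ by lra. lra.
Qed.

Lemma Dg_mod2 g0 r d j : 0 < r <= 1 -> (forall m, 1 <= qg g0 m) ->
  (forall m, (1 <= m)%nat -> qg g0 m <= (/ r) ^ m) ->
  INR d > Dg g0 r (3 * j + 5) ->
  (8/9) ^ d * qg g0 (3 * j + 4) < 1/2 /\ (8/9) ^ d * qg g0 (3 * j + 6) < 1/2.
Proof.
  intros Hr Hq0 Hq Hd. pose proof (pow_lt (8/9) d ltac:(lra)).
  unfold Dg in Hd. replace (3 * j + 5)%nat with (3 * (j + 1) + 2)%nat in Hd by lia.
  destruct (mod_div_3 (j + 1) 2 ltac:(lia)) as [Hmod _]. rewrite Hmod in Hd.
  change (Nat.eqb 2 0) with false in Hd; change (Nat.eqb 2 1) with false in Hd; cbv iota in Hd.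
  replace (3 * (j + 1) + 2)%nat with (3 * j + 5)%nat in Hd by lia.
  pose proof (Hq0 (3 * j + 4)%nat). pose proof (Hq0 (3 * j + 6)%nat).
  destruct j as [|j].
  -
    change (Nat.eqb (3 * 0 + 5) 5) with true in Hd. cbv iota in Hd.
    simpl in Hd |- *. pose proof (Hq0 4%nat). pose proof (Hq0 6%nat).
    assert (2 * qg g0 4 * qg g0 6 * (8/9) ^ d < 1) by (apply log98_conv; [nra|exact Hd]).
    split; nra.
  -
    replace (Nat.eqb (3 * S j + 5) 5) with false in Hd by (symmetry; apply Nat.eqb_neq; lia).
    assert (HZ : 2 * (/ r) ^ (3 * S j + 6) * (8/9) ^ d < 1).
    { apply log98_conv; [apply Rmult_lt_0_compat; [lra|apply pow_lt, Rinv_0_lt_compat; lra]|].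
      rewrite log98_mult, log98_inv_pow by (try apply pow_lt, Rinv_0_lt_compat; lra).
      replace (INR (3 * S j + 6)) with (INR (3 * S j + 5) + 1)
        by (rewrite !plus_INR; simpl; ring).
      lra. }
    pose proof (Hq (3 * S j + 4)%nat ltac:(lia)). pose proof (Hq (3 * S j + 6)%nat ltac:(lia)).
    assert ((/ r) ^ (3 * S j + 4) <= (/ r) ^ (3 * S j + 6)).
    { apply Rle_pow; [|lia]. rewrite <- Rinv_1. apply Rinv_le_contravar; lra. }
    split; nra.
Qed.

Lemma mod3_cases n : (3 <= n)%nat ->
  (exists k, (1 <= k)%nat /\ n = (3 * k)%nat) \/ (exists j, n = (3 * j + 5)%nat) \/
  (exists i, n = (3 * i + 4)%nat).
Proof.
  intros Hn. pose proof (Nat.div_mod n 3 ltac:(lia)). pose proof (Nat.mod_upper_bound n 3 ltac:(lia)).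
  destruct (n mod 3)%nat as [|[|[|s]]]; [| | |lia].
  - left. exists (n / 3)%nat. lia.
  - right; right. exists (n / 3 - 1)%nat. lia.
  - right; left. exists (n / 3 - 1)%nat. lia.
Qed.

Lemma ratio_lt_one_iff A B C : 0 < B -> 0 < C -> (A ^ 2 / (B * C) < 1 <-> A ^ 2 < B * C).
Proof.
  intros HB HC. assert (HBC : 0 < B * C) by nra. split; intros H.
  - apply Rmult_lt_compat_r with (r := B * C) in H; [|lra].
    unfold Rdiv in H. rewrite Rmult_assoc, Rinv_l in H by lra. lra.
  - apply Rmult_lt_reg_r with (B * C); [lra|].
    unfold Rdiv. rewrite Rmult_assoc, Rinv_l by lra. lra.
Qed.

Theorem theorem1 (g : nat -> nat -> R) (r : R)
  (hpos : forall d n : nat, (1 <= n)%nat -> 0 < g d n)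
  (h1 : forall d : nat, g d 1%nat = 1)
  (hlow : forall d n : nat, (1 <= n)%nat -> 0 <= g d n - INR n ^ d)
  (hup : forall d n : nat, (1 <= n)%nat ->
           g d n - INR n ^ d <= (g 0%nat n - 1) * INR (n - 1) ^ d)
  (hr0 : 0 < r) (hr1 : r <= 1)
  (hq : forall n : nat, (1 <= n)%nat -> qg (g 0%nat) n <= / r ^ n)
  (n d : nat) (hn : (3 <= n)%nat) (hd : INR d > Dg (g 0%nat) r n) :
  (qg (g d) n ^ 2 / (qg (g d) (n - 1) * qg (g d) (n + 1)) < 1
   <-> (n mod 3 = 1)%nat).
Proof.
  assert (hG0 : forall j, (1 <= j)%nat -> 1 <= g 0%nat j)
    by (intros j Hj; pose proof (hlow 0%nat j Hj); simpl in *; lra).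
  assert (hGlow : forall j, (1 <= j)%nat -> INR j ^ d <= g d j)
    by (intros j Hj; pose proof (hlow d j Hj); lra).
  assert (hGup : forall j, (1 <= j)%nat ->
            g d j <= INR j ^ d + (g 0%nat j - 1) * INR (j - 1) ^ d)
    by (intros j Hj; pose proof (hup d j Hj); lra).
  assert (hrho : forall m, (1 <= m)%nat -> qg (g 0%nat) m <= (/ r) ^ m)
    by (intros m Hm; rewrite pow_inv; apply hq, Hm).
  pose proof (q0_ge1 (g 0%nat) (h1 0%nat) hG0) as Hq0.
  pose proof (q_ge1 (g d) d (h1 d) hGlow) as Hq.
  rewrite ratio_lt_one_iff by (apply (Rlt_le_trans _ 1); [lra|apply Hq]).
  destruct (mod3_cases n hn) as [[k [Hk ->]]|[[j ->]|[i ->]]].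
  -
    replace ((3 * k) mod 3)%nat with 0%nat by (apply (Nat.mod_unique _ _ k); lia).
    split; [|lia]. intros Hlt.
    pose proof (ratio_mod0 (g d) (g 0%nat) d (h1 d) (h1 0%nat) hG0 hGlow hGup _ hrho k Hk
                  (Dg_mod0 _ _ _ _ hr0 hd)). lra.
  -
    replace ((3 * j + 5) mod 3)%nat with 2%nat by (apply (Nat.mod_unique _ _ (j + 1)); lia).
    split; [|lia]. intros Hlt.
    destruct (Dg_mod2 _ _ _ _ (conj hr0 hr1) Hq0 hrho hd) as [Hhalf4 Hhalf6].
    pose proof (ratio_mod2 (g d) (g 0%nat) d (h1 d) (h1 0%nat) hG0 hGlow hGup j Hhalf4 Hhalf6).
    replace (3 * j + 5 - 1)%nat with (3 * j + 4)%nat in Hlt by lia.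
    replace (3 * j + 5 + 1)%nat with (3 * j + 6)%nat in Hlt by lia. lra.
  -
    replace ((3 * i + 4) mod 3)%nat with 1%nat by (apply (Nat.mod_unique _ _ (i + 1)); lia).
    split; [lia|intros _].
    replace (3 * i + 4 - 1)%nat with (3 * i + 3)%nat by lia.
    replace (3 * i + 4 + 1)%nat with (3 * i + 5)%nat by lia.
    exact (ratio_mod1 (g d) (g 0%nat) d (h1 d) (h1 0%nat) hG0 hGlow hGup _ hrho i
             (Dg_mod1 _ _ _ _ hr0 hd)).
Qed.
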